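(* For every integer $m\ge0$ and every integer $l\ge 2m+3$, \[ \mu_l^{(m+1,m+2)}=2P_{l-2m-3}^{\{-2,m-1,m\}} . \]
   Context: An $n$-board is the strip $[0,n]\times[0,1]$ divided into unit cells, each split into a left and a right half (slot). A $(w,g;t)$-comb is a tile consisting of a row of $t$ rectangles (teeth) of size $w\times1$, consecutive teeth separated by a gap of width $g$; gaps are not part of the tile and may be occupied by other tiles. A tiling is a placement of translated (unrotated) combs whose teeth cover the board exactly without overlap. Given a tiling of an $n$-board, an integer $x$ with $0<x<n$ is a cut point if every comb has all of its teeth in $[0,x]$ or all in $[x,n]$. A metatile of length $l$ is a tiling of an $l$-board with no cut point. A metatile is mixed if it contains combs of more than one type. For integers $1\le m_1<m_2$, $\mu_l^{(m_1,m_2)}$ is the number of mixed metatiles of length $l$ when tiling with $(\frac12,\frac12;m_1)$- and $(\frac12,\frac12;m_2)$-combs. For a finite set $W$ of integers, $P_n^W$ is the number of permutations $\pi$ of $\{1,\dots,n\}$ with $\pi(i)-i\in W$ for all $i$ (equivalently, the permanent of the $n\times n$ $(0,1)$ matrix whose $(i,j)$ entry is $1$ iff $j-i\in W$), with $P_0^W=1$. *)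

From mathcomp Require Import all_boot all_order all_algebra all_fingroup.
Unset Printing Implicit Defensive.
Import GRing.Theory Num.Theory.

(* Slots of an n-board: the half-cell [k/2,(k+1)/2] is slot k, 0 <= k < 2n.
   A (1/2,1/2;t)-comb placed with its first tooth on slot s covers the slots
   s, s+2, ..., s+2(t-1).  A placed comb is a pair (s, b) : 'I_(2n) * bool,
   with b = false meaning a (1/2,1/2;m1)-comb and b = true a (1/2,1/2;m2)-comb. *)

Definition comb_len (m1 m2 : nat) (b : bool) : nat := if b then m2 else m1.

Definition covers (m1 m2 : nat) (s : nat) (b : bool) (j : nat) : bool :=
  has (fun k => s + 2 * k == j) (iota 0 (comb_len m1 m2 b)).

Definition last_slot (m1 m2 : nat) (s : nat) (b : bool) : nat :=
  s + 2 * (comb_len m1 m2 b).-1.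

Definition is_tiling (m1 m2 n : nat) (T : {set 'I_(2 * n) * bool}) : bool :=
  [forall p in T, last_slot m1 m2 p.1 p.2 < 2 * n] &&
  [forall j : 'I_(2 * n), #|[set p in T | covers m1 m2 p.1 p.2 j]| == 1].

Definition is_cut_point (m1 m2 n : nat) (T : {set 'I_(2 * n) * bool}) (x : nat)
  : bool :=
  [forall p in T, (last_slot m1 m2 p.1 p.2 < 2 * x) || (2 * x <= p.1)].

Definition is_metatile (m1 m2 l : nat) (T : {set 'I_(2 * l) * bool}) : bool :=
  is_tiling m1 m2 l T &&
  [forall x : 'I_l, (0 < (x : nat)) ==> ~~ is_cut_point m1 m2 l T x].

Definition is_mixed (l : nat) (T : {set 'I_(2 * l) * bool}) : bool :=
  [exists p in T, p.2] && [exists p in T, ~~ p.2].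

Definition mu (m1 m2 l : nat) : nat :=
  #|[set T : {set 'I_(2 * l) * bool} | is_metatile m1 m2 l T && is_mixed l T]|.

Definition Pcount (n : nat) (W : seq int) : nat :=
  #|[set s : 'S_n | [forall i : 'I_n, ((s i)%:Z - i%:Z)%R \in W]]|.

From mathcomp Require Import all_boot all_order all_algebra all_fingroup.
From mathcomp Require Import zify.

(* Every comb lives on the slots of one parity, so a tiling of the board is a
   pair of tilings of two lines of [l] cells by intervals of lengths [a = m+1]
   and [a+1], and a cut point is a common interior break of the two lines.  In
   a metatile the lines begin with combs of different lengths (otherwise that
   length is a cut point); this gives the factor 2, and we may assume that the
   first line begins with a short comb.  All other combs then start at cells
   [a + x] with [x <= n + 1], where [n = l - 2m - 3].  Sending [x < n] to
   [x + t - 2] if a comb with [t] teeth starts at [a + x], and to [x - 2]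
   otherwise, is a bijection from these metatiles onto the permutations [s] of
   [{0, ..., n-1}] with [s x - x] in [{-2, m-1, m}]: the combs are recovered by
   following the chains [x -> s x + 2] from 0 and 1, which are disjoint and end
   at [n] and [n+1]. *)

Set Implicit Arguments.
Unset Strict Implicit.

Lemma half_double_bit c (b : bool) : (2 * c + b)./2 = c.
Proof. by rewrite mul2n addnC half_bit_double. Qed.

Lemma odd_double_bit c (b : bool) : odd (2 * c + b) = b.
Proof. by rewrite oddD mul2n odd_double; case: b. Qed.

Lemma double_half_odd s : s = 2 * s./2 + odd s.
Proof. by rewrite mul2n addnC odd_double_half. Qed.

Section Lines.

Variables (m1 m2 l : nat) (f : bool).
Hypothesis comb_lens : 0 < m1 < m2.

Local Notation tset := {set 'I_(2 * l) * bool}.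
Local Notation len := (comb_len m1 m2).

Lemma comb_len_gt0 b : 0 < len b.
Proof. by case: b => /=; lia. Qed.

Lemma comb_len_inj : injective len.
Proof. by case=> [] [] //=; lia. Qed.

Lemma coversE c (P : bool) b d (Q : bool) :
  covers m1 m2 (2 * c + P) b (2 * d + Q) = (P == Q) && (c <= d < c + len b).
Proof.
rewrite /covers; apply/hasP/idP.
- case=> k; rewrite mem_iota add0n => hk /eqP e.
  by case: P Q e => [] [] /= e; rewrite ?eqxx /=; lia.
- case/andP => /eqP <- /andP [h1 h2]; exists (d - c); first by rewrite mem_iota; lia.
  by apply/eqP; lia.
Qed.

Lemma last_slotE c (P : bool) b :
  last_slot m1 m2 (2 * c + P) b = 2 * (c + len b - 1) + P.
Proof. by rewrite /last_slot; have := comb_len_gt0 b; lia. Qed.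

(* The slots of parity [L (+) f] form line [L], whose cell [c] is the slot
   [2 * c + (L (+) f)]; a comb covers an interval of cells of one line.  The
   flip [f] lets either parity play the role of line [false]. *)
Definition comb_at (T : tset) (L : bool) (c t : nat) : Prop :=
  exists2 p, p \in T & (p.1 : nat) = 2 * c + (L (+) f) /\ t = len p.2.

Lemma comb_at_mem (T : tset) p : p \in T -> comb_at T (odd p.1 (+) f) p.1./2 (len p.2).
Proof. by move=> pT; exists p => //; rewrite addbK -double_half_odd. Qed.

Lemma comb_at_len (T : tset) L c t : comb_at T L c t -> t = m1 \/ t = m2.
Proof. by case=> p _ [_ ->]; case: p.2; [right | left]. Qed.

Lemma comb_at_gt0 (T : tset) L c t : comb_at T L c t -> 0 < t.
Proof. by case=> p _ [_ ->]; apply: comb_len_gt0. Qed.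

Lemma comb_at_kind (T : tset) L c b :
  comb_at T L c (len b) -> exists2 p, p \in T & (p.1 : nat) = 2 * c + (L (+) f) /\ p.2 = b.
Proof. by case=> p pT [e /comb_len_inj eb]; exists p. Qed.

Lemma comb_startP (T : tset) c :
  reflect (exists L t, comb_at T L c t) [exists p in T, p.1./2 == c].
Proof.
apply: (iffP existsP) => [[p /andP [pT /eqP <-]] | [L [t [p pT [e _]]]]].
  by exists (odd p.1 (+) f), (len p.2); apply: comb_at_mem.
by exists p; rewrite pT e half_double_bit eqxx.
Qed.

Lemma first_comb_shortP (T : tset) :
  reflect (comb_at T false 0 m1) [exists p in T, ((p.1 : nat) == f) && ~~ p.2].
Proof.
apply: (iffP existsP) => [[p /and3P [pT /eqP e /negbTE b]] | /(comb_at_kind (b := false))].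
  by exists p => //; rewrite e b.
by case=> p pT [e b]; exists p; rewrite pT e b muln0 add0n eqxx.
Qed.

Lemma comb_at_mixed (T : tset) L c L' c' :
  comb_at T L c m2 -> comb_at T L' c' m1 -> is_mixed l T.
Proof.
move=> /(comb_at_kind (b := true)) [p pT [_ b]] /(comb_at_kind (b := false)) [q qT [_ b']].
by apply/andP; split; apply/existsP; [exists p; rewrite pT b | exists q; rewrite qT b'].
Qed.

Record line_tiling (T : tset) : Prop := LineTiling {
  comb_at_bound : forall L c t, comb_at T L c t -> c + t <= l;
  comb_at_cover : forall L d, d < l ->
    exists c t, [/\ comb_at T L c t, c <= d & d < c + t];
  comb_at_unique : forall L c t c' t' d, comb_at T L c t -> comb_at T L c' t' ->
    c <= d < c + t -> c' <= d < c' + t' -> c = c' /\ t = t' }.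

Lemma cell_slot_lt L d : d < l -> 2 * d + (L (+) f) < 2 * l.
Proof. lia. Qed.

Lemma is_tiling_line_tiling (T : tset) : is_tiling m1 m2 l T -> line_tiling T.
Proof.
case/andP => /forallP T_bound /forallP T_cover.
have covering L d (hd : d < l) :
    exists p, [set p in T | covers m1 m2 p.1 p.2 (Ordinal (cell_slot_lt L hd))] = [set p].
  exact/cards1P/T_cover.
have bound L c t : comb_at T L c t -> c + t <= l.
  case=> p pT [e1 e2]; move: (T_bound p); rewrite pT /= e1 last_slotE -e2; lia.
split=> [|L d hd|L c t c' t' d H H' hd hd']; first exact: bound.
- have [p Hp] := covering L d hd.
  have : p \in [set p in T | covers m1 m2 p.1 p.2 (Ordinal (cell_slot_lt L hd))].
    by rewrite Hp set11.
  rewrite inE (double_half_odd p.1) /= coversE => /andP [pT /andP [/eqP e hcd]].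
  exists p.1./2, (len p.2); split; [|by case/andP: hcd..].
  by exists p => //; rewrite {1}(double_half_odd p.1) e.
- have hdl : d < l by have := bound _ _ _ H; lia.
  have [q Hq] := covering L d hdl.
  have cov_q b p : p \in T -> (p.1 : nat) = 2 * b + (L (+) f) ->
      b <= d < b + len p.2 -> p = q.
    by move=> pT e hp; apply/set1P; rewrite -Hq inE pT e /= coversE eqxx.
  case: H H' hd hd' => p pT [e ->] [p' p'T [e' ->]] hd hd'.
  have E : p = p' by rewrite (cov_q _ _ pT e hd) (cov_q _ _ p'T e' hd').
  by split; [move: e e'; rewrite E => -> | rewrite E]; lia.
Qed.

Lemma line_tiling_is_tiling (T : tset) : line_tiling T -> is_tiling m1 m2 l T.
Proof.
case=> bound cover unique; apply/andP; split.
  apply/forallP => p; apply/implyP => pT; have := bound _ _ _ (comb_at_mem pT).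
  rewrite [X in last_slot _ _ X](double_half_odd p.1) last_slotE.
  by have := comb_len_gt0 p.2; lia.
apply/forallP => j; apply/cards1P.
have hj : j./2 < l by have := ltn_ord j; rewrite [X in X < _]double_half_odd; lia.
have [c [t [[q qT [e ->]] hc hct]]] := cover (odd j (+) f) _ hj.
exists q; apply/setP => p; rewrite !inE; apply/andP/eqP => [[pT]|->].
  rewrite [X in covers _ _ X](double_half_odd p.1) [X in covers _ _ _ _ X](double_half_odd j).
  rewrite coversE => /andP [/eqP odd_pj hp].
  have Hq : comb_at T (odd j (+) f) c (len q.2) by exists q.
  have := comb_at_mem pT; rewrite odd_pj => Hp.
  have [ec et] := unique _ _ _ _ _ _ Hp Hq hp (introT andP (conj hc hct)).
  case: p q {pT Hp Hq qT hp hc hct} odd_pj ec et e => [p1 p2] [q1 q2] /= odd_pj ec et e.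
  rewrite (comb_len_inj et).
  by congr pair; apply: val_inj; rewrite /= e (double_half_odd p1) ec odd_pj addbK.
by rewrite qT e [X in covers _ _ _ _ X](double_half_odd j) coversE addbK eqxx hc hct.
Qed.

Lemma is_tilingP (T : tset) : is_tiling m1 m2 l T <-> line_tiling T.
Proof. by split; [apply: is_tiling_line_tiling | apply: line_tiling_is_tiling]. Qed.

Lemma is_cut_pointP (T : tset) x : line_tiling T -> x < l ->
  is_cut_point m1 m2 l T x <-> (forall L, exists t, comb_at T L x t).
Proof.
case=> _ cover unique hx; split => [/forallP cut L | starts].
  have [c [t [[p pT [e et]] hc hct]]] := cover L x hx.
  have [<-|ne] := eqVneq c x; first by exists t; exists p.
  by move: (cut p); rewrite pT /= e last_slotE -et; lia.
apply/forallP => p; apply/implyP => pT.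
have [t Hx] := starts (odd p.1 (+) f).
have Hp := comb_at_mem pT; have := comb_at_gt0 Hx; have := comb_len_gt0 p.2.
rewrite [X in last_slot _ _ X](double_half_odd p.1) last_slotE {2}(double_half_odd p.1).
have [|] := leqP (p.1./2 + len p.2) x; first by move=> *; apply/orP; left; lia.
have [|] := leqP x p.1./2; first by move=> *; apply/orP; right; lia.
move=> hpx hxp t_gt0 len_gt0.
have [] := unique _ _ _ _ _ x Hx Hp (_ : x <= x < x + t) (_ : p.1./2 <= x < _); lia.
Qed.

Definition no_common_break (T : tset) : Prop :=
  forall c t t', 0 < c -> comb_at T false c t -> comb_at T true c t' -> False.

Lemma is_metatileP (T : tset) :
  is_metatile m1 m2 l T <-> line_tiling T /\ no_common_break T.
Proof.
split=> [/andP [/is_tilingP HT /forallP no_cut] | [HT no_break]].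
  split=> // c t t' c_gt0 H0 H1.
  have c_lt_l : c < l by have := comb_at_bound HT H0; have := comb_at_gt0 H0; lia.
  move/implyP: (no_cut (Ordinal c_lt_l)) => /(_ c_gt0) /negP; apply.
  by apply/(is_cut_pointP HT c_lt_l); case; [exists t' | exists t].
apply/andP; split; first exact/is_tilingP.
apply/forallP => x; apply/implyP => x_gt0; apply/negP.
move/(is_cut_pointP HT (ltn_ord x)) => starts.
by have [[t0 H0] [t1 H1]] := (starts false, starts true); apply: no_break H0 H1.
Qed.

Section LineTiling.

Variable T : tset.
Hypothesis HT : line_tiling T.

Lemma comb_at_len_uniq L c t t' : comb_at T L c t -> comb_at T L c t' -> t = t'.
Proof.
move=> H H'; have := comb_at_gt0 H; have := comb_at_gt0 H' => *.
by have [] := comb_at_unique HT H H' (_ : c <= c < c + t) (_ : c <= c < c + t'); lia.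
Qed.

Lemma comb_at_first L : 0 < l -> exists t, comb_at T L 0 t.
Proof.
move=> l_gt0; have [c [t [H hc _]]] := comb_at_cover HT L l_gt0.
by exists t; rewrite -(_ : c = 0) //; lia.
Qed.

Lemma comb_at_next L c t : comb_at T L c t -> c + t < l -> exists t', comb_at T L (c + t) t'.
Proof.
move=> H hct; have [c' [t' [H' hc' hct']]] := comb_at_cover HT L hct.
have [hlt|hge] := ltnP c' (c + t); last by exists t'; rewrite -(_ : c' = c + t) //; lia.
have := comb_at_gt0 H; have := comb_at_gt0 H' => *.
have [] := comb_at_unique HT H H' (_ : c <= c + t - 1 < c + t)
                                  (_ : c' <= c + t - 1 < c' + t'); lia.
Qed.

Lemma comb_at_prev L c t : comb_at T L c t -> 0 < c ->
  exists c' t', comb_at T L c' t' /\ c' + t' = c.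
Proof.
move=> H c_gt0; have := comb_at_bound HT H; have := comb_at_gt0 H => *.
have [c' [t' [H' hc' hct']]] :
    exists c' t', [/\ comb_at T L c' t', c' <= c - 1 & c - 1 < c' + t'].
  by apply: (comb_at_cover HT); lia.
have [hle|hgt] := leqP (c' + t') c; first by exists c', t'; split => //; lia.
have [] := comb_at_unique HT H H' (_ : c <= c < c + t) (_ : c' <= c < c' + t'); lia.
Qed.

Lemma line_tiling_eq T' : line_tiling T' -> T' \subset T -> T' = T.
Proof.
move=> HT' sub; apply/eqP; rewrite eqEsubset sub; apply/subsetP => p pT.
have Hp := comb_at_mem pT.
have hp : p.1./2 < l by have := comb_at_bound HT Hp; have := comb_len_gt0 p.2; lia.
have [c [t [[q qT' [e ->]] hc hct]]] := comb_at_cover HT' (odd p.1 (+) f) hp.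
have Hq : comb_at T (odd p.1 (+) f) c (len q.2) by exists q => //; apply: (subsetP sub).
have hp1 : p.1./2 <= p.1./2 < p.1./2 + len p.2 by have := comb_len_gt0 p.2; lia.
have [ec et] := comb_at_unique HT Hq Hp (introT andP (conj hc hct)) hp1.
suff -> : p = q by [].
case: p q {pT Hp Hq qT' hp hc hct hp1} ec et e => [p1 p2] [q1 q2] /= ec et e.
rewrite (comb_len_inj et); congr pair; apply: val_inj.
by rewrite /= e {1}(double_half_odd p1) ec addbK.
Qed.

Hypothesis no_break : no_common_break T.

Lemma comb_at_line L L' c t t' : 0 < c -> comb_at T L c t -> comb_at T L' c t' -> L' = L.
Proof.
case: L L' => [] [] // c_gt0 H H'; first by case: (no_break c_gt0 H' H).
by case: (no_break c_gt0 H H').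
Qed.

Lemma first_combs_neq t0 t1 :
  comb_at T false 0 t0 -> comb_at T true 0 t1 -> t0 < l -> t0 <> t1.
Proof.
move=> H0 H1 t0_lt_l et; rewrite -et in H1.
have [[t H0'] [t' H1']] := (comb_at_next H0 t0_lt_l, comb_at_next H1 t0_lt_l).
exact: no_break (comb_at_gt0 H0) H0' H1'.
Qed.

End LineTiling.

End Lines.

Lemma comb_at_flip m1 m2 l f (T : {set 'I_(2 * l) * bool}) L c t :
  comb_at m1 m2 f T L c t <-> comb_at m1 m2 (~~ f) T (~~ L) c t.
Proof. by rewrite /comb_at addbN addNb negbK. Qed.

Definition admissible (m n : nat) (s : 'S_n) : bool :=
  [forall i : 'I_n, [|| (s i).+2 == i, (s i).+2 == i + m.+1 | (s i).+2 == i + m.+2]].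

Lemma Pcount_admissible m n :
  Pcount n [:: (- 2)%R; (Posz m - 1)%R; Posz m] = #|[set s : 'S_n | admissible m s]|.
Proof.
apply: eq_card => s; rewrite !inE; apply: eq_forallb => i.
by rewrite !inE; congr [|| _, _ | _]; apply/eqP/eqP; lia.
Qed.

Section Chains.

Variables (m n : nat) (s : 'S_n).
Local Notation a := m.+1.
Local Notation l := (n + (2 * m + 3)).

(* [s] as a function on [nat], with junk value [0] at [x >= n]. *)
Definition sn (x : nat) : nat := if insub x : option 'I_n is Some i then s i else 0.

Lemma snE (i : 'I_n) : sn i = s i.
Proof. by rewrite /sn valK. Qed.

Lemma sn_ord x (x_lt_n : x < n) : sn x = s (Ordinal x_lt_n).
Proof. by rewrite -snE. Qed.

Lemma sn_lt x : x < n -> sn x < n.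
Proof. by move=> x_lt_n; rewrite (sn_ord x_lt_n). Qed.

Lemma sn_inj x y : x < n -> y < n -> sn x = sn y -> x = y.
Proof.
move=> x_lt_n y_lt_n; rewrite (sn_ord x_lt_n) (sn_ord y_lt_n) => /val_inj/perm_inj.
by move/(congr1 val).
Qed.

Lemma sn_surj v : v < n -> exists2 x, x < n & sn x = v.
Proof. by move=> v_lt_n; exists (s^-1 (Ordinal v_lt_n))%g => //; rewrite snE permKV. Qed.

(* In the tiling built from [s], a comb starts at cell [a + x] iff [start x];
   it has [teeth x] teeth and is followed by a comb starting at
   [a + chain_next x].  Below [n] this happens iff [s x + 2 <> x]; the two lines
   end with combs starting at [a + n] and [a + n.+1]. *)
Definition jump (x : nat) : bool := (x < n) && ((sn x).+2 != x).

Definition start (x : nat) : bool := [|| jump x, x == n | x == n.+1].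

(* Off jumps, [chain_next] leaves the board, which keeps it injective. *)
Definition chain_next (x : nat) : nat := if jump x then (sn x).+2 else x + l.

Definition teeth (x : nat) : nat :=
  if jump x then (sn x).+2 - x else if x == n then a.+1 else a.

Lemma jumpF x : n <= x -> jump x = false.
Proof. by rewrite /jump leqNgt => /negbTE ->. Qed.

Lemma jump_lt x : jump x -> x < n.
Proof. by case/andP. Qed.

Lemma start_jump x : start x -> x < n -> jump x.
Proof. by case/or3P => // /eqP ->; lia. Qed.

Lemma jump_start x : jump x -> start x.
Proof. by rewrite /start => ->. Qed.

Lemma chain_next_gt1 x : 1 < chain_next x.
Proof. by rewrite /chain_next; case: ifP; lia. Qed.

Lemma chain_next_inj : injective chain_next.
Proof.
move=> x y; rewrite /chain_next.
case jx: (jump x); case jy: (jump y) => e; last by lia.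
- by apply: sn_inj (jump_lt jx) (jump_lt jy) _; lia.
- by have := sn_lt (jump_lt jx); lia.
- by have := sn_lt (jump_lt jy); lia.
Qed.

Lemma start_small x : x < 2 -> start x.
Proof.
move=> x_lt2; have [x_lt_n|] := ltnP x n; last by rewrite /start; lia.
by apply: jump_start; rewrite /jump x_lt_n; apply/eqP; lia.
Qed.

Lemma start_chain_next x : jump x -> start (chain_next x).
Proof.
move=> jx; have x_lt_n := jump_lt jx; rewrite /chain_next jx /start.
have [y_lt_n|] := ltnP (sn x).+2 n; last by have := sn_lt x_lt_n; lia.
rewrite /jump y_lt_n /=; apply/orP; left; apply: contraNneq (proj2 (andP jx)) => e.
by apply/eqP/(sn_inj y_lt_n x_lt_n); lia.
Qed.

Lemma start_chain_prev x : start x -> 1 < x -> exists2 y, jump y & chain_next y = x.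
Proof.
move=> sx x_gt1.
have x2_lt_n : x - 2 < n by case/or3P: sx => [/jump_lt|/eqP|/eqP]; lia.
have [y y_lt_n e] := sn_surj x2_lt_n.
have jy : jump y.
  rewrite /jump y_lt_n e /=; apply/eqP => exy.
  have {}exy : y = x by lia.
  case/or3P: sx => [/andP [_]|/eqP|/eqP]; rewrite -?exy ?e; lia.
by exists y => //; rewrite /chain_next jy e; lia.
Qed.

Definition on_chain (r x : nat) : bool := [exists k : 'I_x.+1, iter k chain_next r == x].

Hypothesis s_adm : admissible m s.

Lemma sn_shift x : x < n ->
  [|| (sn x).+2 == x, (sn x).+2 == x + a | (sn x).+2 == x + a.+1].
Proof. by move=> x_lt_n; rewrite (sn_ord x_lt_n); move/forallP: s_adm; apply. Qed.

Lemma chain_next_jump x : jump x -> chain_next x = x + teeth x.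
Proof.
rewrite /chain_next /teeth => jx; rewrite jx; case/andP: jx => x_lt_n.
by move: (sn_shift x_lt_n); lia.
Qed.

Lemma start_teeth x : start x -> teeth x = a \/ teeth x = a.+1.
Proof.
rewrite /teeth; case/or3P => [jx | /eqP -> | /eqP ->]; last 2 first.
- by rewrite jumpF ?eqxx //; right.
- by rewrite jumpF //; case: eqP; [lia | left].
by rewrite jx; case/andP: jx => x_lt_n; move: (sn_shift x_lt_n); lia.
Qed.

Lemma start_end x : start x -> a + x + teeth x <= l /\ (n <= x -> a + x + teeth x = l).
Proof.
rewrite /teeth; case/or3P => [jx | /eqP -> | /eqP ->]; last 2 first.
- by rewrite jumpF ?eqxx //; lia.
- by rewrite jumpF //; case: eqP; lia.
by rewrite jx; have := sn_lt (jump_lt jx); have := jump_lt jx; lia.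
Qed.

Lemma chain_next_gt x : x < chain_next x.
Proof.
case jx: (jump x); last by rewrite /chain_next jx; lia.
by rewrite chain_next_jump //; have [] := start_teeth (jump_start jx); lia.
Qed.

Lemma teeth_le_chain_next x : start x -> x + teeth x <= chain_next x.
Proof.
case jx: (jump x); first by rewrite chain_next_jump.
by move/start_teeth; rewrite /chain_next jx; lia.
Qed.

Lemma iter_chain_next_ge k x : x + k <= iter k chain_next x.
Proof. by elim: k => [|k IH] /=; [lia | have := chain_next_gt (iter k chain_next x); lia]. Qed.

Lemma on_chainP r x : reflect (exists k, iter k chain_next r = x) (on_chain r x).
Proof.
apply: (iffP existsP) => [[k /eqP e] | [k e]]; first by exists k.
have k_lt : k < x.+1 by have := iter_chain_next_ge k r; lia.
by exists (Ordinal k_lt); rewrite /= e.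
Qed.

Lemma on_chain_refl r : on_chain r r.
Proof. by apply/on_chainP; exists 0. Qed.

Lemma on_chain_next r x : on_chain r x -> on_chain r (chain_next x).
Proof. by case/on_chainP => k e; apply/on_chainP; exists k.+1; rewrite /= e. Qed.

Lemma on_chain_disjoint x : on_chain 0 x -> on_chain 1 x -> False.
Proof.
case/on_chainP => p <- /on_chainP [q]; elim: p q => [|p IH] [|q] //=.
- by have := chain_next_gt1 (iter q chain_next 1); lia.
- by have := chain_next_gt1 (iter p chain_next 0); lia.
- by move/chain_next_inj; apply: IH.
Qed.

Lemma start_on_chain x : start x -> on_chain 0 x || on_chain 1 x.
Proof.
elim/ltn_ind: x => x IH sx; have [x_le1|x_gt1] := leqP x 1.
  by case: x x_le1 {IH sx} => [|[|]] // _; rewrite on_chain_refl ?orbT.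
have [y jy ey] := start_chain_prev sx x_gt1.
have y_lt_x : y < x by rewrite -ey chain_next_gt.
by rewrite -ey; case/orP: (IH y y_lt_x (jump_start jy)) => /on_chain_next ->; rewrite ?orbT.
Qed.

Lemma on_chain_start (r : bool) x : on_chain r x -> a + x < l -> start x.
Proof.
case/on_chainP => k <-; suff : start (iter k chain_next r) \/ l <= iter k chain_next r by lia.
elim: k => [|k [sx|]] /=; first by left; apply: start_small; case: r.
  case jx: (jump (iter k chain_next r)); first by left; apply: start_chain_next.
  by right; rewrite /chain_next jx; lia.
by have := chain_next_gt (iter k chain_next r); right; lia.
Qed.

Lemma on_chain_sorted r x y : on_chain r x -> on_chain r y -> x < y -> chain_next x <= y.
Proof.
case/on_chainP => p <- /on_chainP [q <-]; have [p_lt_q|q_le_p] := ltnP p q.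
  rewrite -(subnK p_lt_q) iterD /=.
  by have := iter_chain_next_ge (q - p.+1) (chain_next (iter p chain_next r)); lia.
by rewrite -(subnK q_le_p) iterD; have := iter_chain_next_ge (p - q) (iter q chain_next r); lia.
Qed.

End Chains.

Lemma comb_lensS m : 0 < m.+1 < m.+2.
Proof. by rewrite ltnSn. Qed.

Lemma comb_lenS m b : comb_len m.+1 m.+2 b = m.+1 + b.
Proof. by case: b; rewrite /= ?addn1 ?addn0. Qed.

Definition short_start_metatiles (m n : nat) (f : bool) :=
  [set T : {set 'I_(2 * (n + (2 * m + 3))) * bool} |
    [&& is_metatile m.+1 m.+2 (n + (2 * m + 3)) T, is_mixed (n + (2 * m + 3)) T &
        [exists p in T, ((p.1 : nat) == f) && ~~ p.2]]].

Section PermToTiling.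

Variables (m n : nat) (f : bool) (s : 'S_n).
Hypothesis s_adm : admissible m s.

Local Notation a := m.+1.
Local Notation l := (n + (2 * m + 3)).
Local Notation lens := (comb_lensS m).
Local Notation comb_at := (comb_at m.+1 m.+2 f).
Local Notation start := (start s).
Local Notation chain_next := (chain_next m s).
Local Notation teeth := (teeth m s).
Local Notation on_chain := (on_chain m s).

(* Line [L] is a comb with [a + L] teeth followed by combs starting at the
   cells [a + x], [x] on the chain from [L]. *)
Definition chain_comb (L : bool) (c t : nat) : bool :=
  ((c == 0) && (t == a + L)) ||
  [&& a <= c, start (c - a), on_chain L (c - a) & t == teeth (c - a)].

Lemma chain_comb_bound L c t : chain_comb L c t -> c + t <= l.
Proof.
case/orP => [/andP [/eqP -> /eqP ->] | /and4P [a_le_c sc _ /eqP ->]]; first by lia.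
by have [e _] := start_end s_adm sc; lia.
Qed.

Lemma chain_comb_gt0 L c t : chain_comb L c t -> 0 < c ->
  [/\ a <= c, start (c - a), on_chain L (c - a) & t = teeth (c - a)].
Proof. by case/orP => [/andP [/eqP -> _] | /and4P [a_le_c sc chc /eqP ->]]. Qed.

Lemma chain_comb_teeth L c t : chain_comb L c t -> t = a \/ t = a.+1.
Proof.
case/orP => [/andP [_ /eqP ->] | /and4P [_ sc _ /eqP ->]]; last exact: (start_teeth s_adm sc).
by case: L; [right | left]; lia.
Qed.

Lemma chain_comb_len L c t t' : chain_comb L c t -> chain_comb L c t' -> t = t'.
Proof.
have [->|c_gt0] := posnP c; first by rewrite /chain_comb !eqxx /= !orbF => /eqP -> /eqP ->.
by move=> /chain_comb_gt0 /(_ c_gt0) [_ _ _ ->] /chain_comb_gt0 /(_ c_gt0) [_ _ _ ->].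
Qed.

Lemma chain_comb_cover L d : d < l -> exists c t, [/\ chain_comb L c t, c <= d & d < c + t].
Proof.
move=> d_lt_l; have [d_lt|d_ge] := ltnP d (a + L).
  by exists 0, (a + L); rewrite /chain_comb !eqxx.
suff walk k x : d - x < k -> on_chain L x -> a + x <= d ->
    exists c t, [/\ chain_comb L c t, c <= d & d < c + t].
  by apply: (walk d.+1 L); [lia | apply: on_chain_refl | lia].
elim: k x => [|k IH] x; first lia.
move=> dx_lt chx ax_le_d; have sx := on_chain_start s_adm chx (leq_ltn_trans ax_le_d d_lt_l).
have [d_lt_end|d_ge_end] := ltnP d (a + x + teeth x).
  exists (a + x), (teeth x); rewrite /chain_comb addKn leq_addr sx chx eqxx orbT.
  by split => //; lia.
have jx : jump s x.
  apply: start_jump => //; rewrite ltnNge; apply/negP => /(proj2 (start_end s_adm sx)); lia.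
have := chain_next_jump s_adm jx; have := start_teeth s_adm sx => tx ex.
by apply: (IH (chain_next x)); [lia | apply: on_chain_next | lia].
Qed.

Lemma chain_comb_sorted L c t c' t' :
  chain_comb L c t -> chain_comb L c' t' -> c < c' -> c + t <= c'.
Proof.
move=> H /chain_comb_gt0 H' c_lt_c'.
have [a_le_c' _ ch' _] := H' (leq_ltn_trans (leq0n c) c_lt_c').
have [c0|c_gt0] := posnP c.
  move: H; rewrite /chain_comb c0 eqxx /= orbF => /eqP ->.
  case: L {H'} ch' => [ch'|_]; last by rewrite add0n addn0.
  rewrite add0n addn1 ltn_neqAle a_le_c' andbT; apply: contraTneq ch' => <-.
  by rewrite subnn; apply/negP => /(on_chain_disjoint s_adm (on_chain_refl s_adm 0)).
case/chain_comb_gt0: H => // a_le_c sc ch ->.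
have := on_chain_sorted s_adm ch ch' (_ : c - a < c' - a); have := teeth_le_chain_next s_adm sc.
lia.
Qed.

Lemma chain_comb_unique L c t c' t' d : chain_comb L c t -> chain_comb L c' t' ->
  c <= d < c + t -> c' <= d < c' + t' -> c = c' /\ t = t'.
Proof.
move=> H H' hd hd'; have [c_lt_c'|c'_lt_c|ec] := ltngtP c c'.
- by have := chain_comb_sorted H H' c_lt_c'; lia.
- by have := chain_comb_sorted H' H c'_lt_c; lia.
by rewrite -ec in H' *; rewrite (chain_comb_len H H').
Qed.

Lemma chain_comb_break c t t' : 0 < c -> chain_comb false c t -> chain_comb true c t' -> False.
Proof.
move=> c_gt0 /chain_comb_gt0 /(_ c_gt0) [_ _ ch0 _] /chain_comb_gt0 /(_ c_gt0) [_ _ ch1 _].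
exact: (on_chain_disjoint s_adm ch0 ch1).
Qed.

Definition tiling_of_perm : {set 'I_(2 * l) * bool} :=
  [set p : 'I_(2 * l) * bool | chain_comb (odd p.1 (+) f) p.1./2 (comb_len m.+1 m.+2 p.2)].

Lemma comb_at_tiling_of_perm L c t : comb_at tiling_of_perm L c t <-> chain_comb L c t.
Proof.
split=> [[p] | H].
  by rewrite inE => H [e ->]; rewrite e half_double_bit odd_double_bit addbK in H.
have c_t_le := chain_comb_bound H.
have t_len : t = comb_len m.+1 m.+2 (t != a).
  by rewrite comb_lenS; case: (chain_comb_teeth H); lia.
have slot_lt : 2 * c + (L (+) f) < 2 * l by case: (chain_comb_teeth H); lia.
exists (Ordinal slot_lt, t != a); last by [].
by rewrite inE /= half_double_bit odd_double_bit addbK -t_len.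
Qed.

Lemma line_tiling_of_perm : line_tiling m.+1 m.+2 f tiling_of_perm.
Proof.
split=> [L c t | L d d_lt_l | L c t c' t' d].
- by move/comb_at_tiling_of_perm/chain_comb_bound.
- have [c [t [H hc hd]]] := chain_comb_cover L d_lt_l.
  by exists c, t; split => //; apply/comb_at_tiling_of_perm.
by move=> /comb_at_tiling_of_perm H /comb_at_tiling_of_perm H'; apply: (chain_comb_unique H H').
Qed.

Lemma tiling_of_perm_short_start : tiling_of_perm \in short_start_metatiles m n f.
Proof.
have first_comb L : comb_at tiling_of_perm L 0 (comb_len m.+1 m.+2 L).
  by apply/comb_at_tiling_of_perm; rewrite /chain_comb comb_lenS !eqxx.
rewrite inE; apply/and3P; split.
- apply/is_metatileP; first exact: lens.
  split; first exact: line_tiling_of_perm.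
  move=> c t t' c_gt0 /comb_at_tiling_of_perm H /comb_at_tiling_of_perm H'.
  exact: chain_comb_break H H'.
- exact: (comb_at_mixed lens (first_comb true) (first_comb false)).
- exact/(first_comb_shortP _ lens)/(first_comb false).
Qed.

End PermToTiling.

Section TilingToPerm.

Variables (m n : nat) (f : bool).

Local Notation a := m.+1.
Local Notation l := (n + (2 * m + 3)).
Local Notation lens := (comb_lensS m).
Local Notation comb_at := (comb_at m.+1 m.+2 f).

Lemma short_start_metatiles_lines T : T \in short_start_metatiles m n f ->
  [/\ line_tiling m.+1 m.+2 f T, no_common_break m.+1 m.+2 f T & comb_at T false 0 a].
Proof.
rewrite inE => /and3P [/(is_metatileP f lens) [HT no_break] _ /(first_comb_shortP _ lens) H0].
by split.
Qed.

Variable T : {set 'I_(2 * l) * bool}.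

(* If a comb starts at cell [a + i], the next comb of its line starts at
   [a + tiling_next i]; otherwise [tiling_next i = i].  For the tiling built
   from [s] this is [(s i).+2]. *)
Definition tiling_next (i : nat) : nat :=
  if [pick p in T | p.1./2 == a + i] is Some p then i + comb_len m.+1 m.+2 p.2 else i.

Hypotheses (HT : line_tiling m.+1 m.+2 f T) (no_break : no_common_break m.+1 m.+2 f T).
Hypothesis short_first : comb_at T false 0 a.

Lemma first_comb L : comb_at T L 0 (a + L).
Proof.
case: L; last by rewrite addn0.
have [a_lt_l l_gt0] : a < l /\ 0 < l by lia.
have [t H] := comb_at_first lens HT true l_gt0.
have := first_combs_neq lens HT no_break short_first H a_lt_l.
by case: (comb_at_len H) => et; rewrite et in H * => // _; rewrite addn1.
Qed.

Lemma second_comb L : exists t, comb_at T L (a + L) t.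
Proof. by apply: (comb_at_next lens HT (first_comb L)); lia. Qed.

Lemma comb_at_ge L c t : comb_at T L c t -> 0 < c -> a + L <= c.
Proof.
move=> H c_gt0; rewrite leqNgt; apply/negP => c_lt.
have := comb_at_gt0 lens H => t_gt0.
have [] := comb_at_unique HT (first_comb L) H (_ : 0 <= c < 0 + (a + L))
                                              (_ : c <= c < c + t); lia.
Qed.

Lemma comb_at_succ L i t :
  i < n -> comb_at T L (a + i) t -> exists t', comb_at T L (a + i + t) t'.
Proof. by move=> i_lt_n H; apply: (comb_at_next lens HT H); case: (comb_at_len H); lia. Qed.

Lemma last_comb L x t : comb_at T L (a + x) t -> n <= x -> a + x + t = l.
Proof.
move=> H x_ge_n; have := comb_at_bound HT H; rewrite leq_eqVlt => /orP [/eqP //|end_lt_l].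
have [t' H'] := comb_at_next lens HT H end_lt_l.
have := comb_at_bound HT H'; have := comb_at_len H; have := comb_at_len H' => ht' ht bound.
have [c [t'' [H'' hc hct]]] := comb_at_cover HT (~~ L) end_lt_l.
have := comb_at_len H''; have [c_lt|c_ge] := ltnP c (a + x + t) => ht''.
  have ec : c = a + x by lia.
  by rewrite ec in H''; move: (comb_at_line no_break (ltn0Sn _) H H''); case: (L).
have ec : c = a + x + t by lia.
by rewrite ec in H''; move: (comb_at_line no_break (ltn0Sn _) H' H''); case: (L).
Qed.

Lemma tiling_next_comb L i t : comb_at T L (a + i) t -> tiling_next i = i + t.
Proof.
move=> H; rewrite /tiling_next; case: pickP => [p /andP [pT /eqP e] | none].
  have := comb_at_mem m.+1 m.+2 f pT; rewrite e => Hp.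
  have eL := comb_at_line no_break (ltn0Sn _) H Hp; rewrite eL in Hp.
  by rewrite (comb_at_len_uniq lens HT Hp H).
by case: H => p pT [e _]; move: (none p); rewrite pT e half_double_bit eqxx.
Qed.

Lemma tiling_next_free i : (forall L t, ~ comb_at T L (a + i) t) -> tiling_next i = i.
Proof.
rewrite /tiling_next; case: pickP => // p /andP [pT /eqP e] none.
by have := comb_at_mem m.+1 m.+2 f pT; rewrite e => /none.
Qed.

Lemma tiling_next_gt1 i : i < n -> 1 < tiling_next i.
Proof.
move=> i_lt_n; have [[t0 H0] [t1 H1]] := (second_comb false, second_comb true).
rewrite addn0 addn1 in H0 H1.
case: (comb_startP m.+1 m.+2 f T (a + i)) => [[L [t H]]|free].
  rewrite (tiling_next_comb H).
  have [i0|] := posnP i; last by have := comb_at_gt0 lens H; lia.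
  have [t_gt1|t_le1] := ltnP 1 t; first lia.
  have [t' H'] := comb_at_succ i_lt_n H; rewrite i0 addn0 in H H'.
  have eL := comb_at_line no_break (ltn0Sn _) H0 H; rewrite eL in H'.
  have et : t = 1 by have := comb_at_gt0 lens H; lia.
  rewrite et addn1 in H'.
  by case: (no_break (ltn0Sn _) H' H1).
rewrite tiling_next_free => [|L t H]; last by apply: free; exists L, t.
have [i_le1|//] := leqP i 1; case: free.
case: i i_le1 {i_lt_n} => [|[|]] // _; first by exists false, t0; rewrite addn0.
by exists true, t1; rewrite addn1.
Qed.

Lemma tiling_next_shift i : i < n ->
  [|| tiling_next i == i, tiling_next i == i + a | tiling_next i == i + a.+1].
Proof.
case: (comb_startP m.+1 m.+2 f T (a + i)) => [[L [t H]]|free] i_lt_n.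
  by rewrite (tiling_next_comb H); case: (comb_at_len H) => ->; rewrite eqxx ?orbT.
by rewrite tiling_next_free ?eqxx // => L t H; apply: free; exists L, t.
Qed.

Lemma tiling_next_le i : i < n -> tiling_next i <= n.+1.
Proof.
case: (comb_startP m.+1 m.+2 f T (a + i)) => [[L [t H]]|free] i_lt_n.
  have [t' H'] := comb_at_succ i_lt_n H; rewrite (tiling_next_comb H).
  by have := comb_at_bound HT H'; have := comb_at_len H'; lia.
by rewrite tiling_next_free => [|L t H]; [lia | apply: free; exists L, t].
Qed.

Lemma tiling_next_inj i j : i < n -> j < n -> tiling_next i = tiling_next j -> i = j.
Proof.
move=> i_lt_n j_lt_n.
case: (comb_startP m.+1 m.+2 f T (a + i)) => [[L [t H]]|free];
case: (comb_startP m.+1 m.+2 f T (a + j)) => [[L' [t' H']]|free'].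
- rewrite (tiling_next_comb H) (tiling_next_comb H') => e.
  have [[u U] [u' U']] := (comb_at_succ i_lt_n H, comb_at_succ j_lt_n H').
  have eij : a + i + t = a + j + t' by lia.
  rewrite eij in U.
  have eL := comb_at_line no_break (ltn0Sn _) U U'; rewrite eL in H'.
  have := comb_at_gt0 lens H; have := comb_at_gt0 lens H' => t'_gt0 t_gt0.
  have [] := comb_at_unique HT H H' (_ : a + i <= a + i + t - 1 < a + i + t)
                                    (_ : a + j <= a + i + t - 1 < a + j + t'); lia.
- rewrite (tiling_next_comb H) tiling_next_free => [e|L' t' H'];
    last by apply: free'; exists L', t'.
  have [u U] := comb_at_succ i_lt_n H; case: free'; exists L, u.
  by rewrite (_ : a + j = a + i + t) //; lia.
- rewrite (tiling_next_comb H') tiling_next_free => [e|L t H]; last by apply: free; exists L, t.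
  have [u U] := comb_at_succ j_lt_n H'; case: free; exists L', u.
  by rewrite (_ : a + i = a + j + t') //; lia.
by rewrite !tiling_next_free // => [L t H|L t H]; [apply: free' | apply: free]; exists L, t.
Qed.

Section TilingPerm.

Variable s : 'S_n.
Hypothesis s_next : forall i : 'I_n, (s i).+2 = tiling_next i.

Lemma sn_tiling_next x : x < n -> (sn s x).+2 = tiling_next x.
Proof. by move=> x_lt_n; rewrite (sn_ord s x_lt_n) s_next. Qed.

Lemma admissible_tiling_next : admissible m s.
Proof. by apply/forallP => i; rewrite s_next; apply: tiling_next_shift. Qed.

Local Notation s_adm := admissible_tiling_next.

Lemma comb_at_jump L i t : i < n -> comb_at T L (a + i) t ->
  [/\ jump s i, teeth m s i = t & chain_next m s i = i + t].
Proof.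
move=> i_lt_n H; have e := sn_tiling_next i_lt_n; rewrite (tiling_next_comb H) in e.
have js : jump s i by rewrite /jump i_lt_n e; have := comb_at_gt0 lens H; lia.
by split => //; rewrite /teeth /chain_next js e //; lia.
Qed.

Lemma comb_at_on_chain L x t : comb_at T L (a + x) t -> on_chain m s L x.
Proof.
elim/ltn_ind: x L t => x IH L t H.
have [c [t' [H' e]]] := comb_at_prev lens HT H (ltn0Sn _).
have [c0|c_gt0] := posnP c.
  rewrite c0 in H' e; rewrite (comb_at_len_uniq lens HT H' (first_comb L)) in e.
  by rewrite (_ : x = L); [exact: (on_chain_refl s_adm L) | lia].
have a_le_c : a <= c by have := comb_at_ge H' c_gt0; lia.
rewrite -(subnKC a_le_c) in H' e; have := comb_at_gt0 lens H' => t'_gt0.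
have [y_lt_n|y_ge_n] := ltnP (c - a) n.
  have [_ _ e_next] := comb_at_jump y_lt_n H'.
  rewrite (_ : x = chain_next m s (c - a)); last lia.
  by apply: (on_chain_next s_adm); apply: (IH _ _ _ _ H'); lia.
by have := last_comb H' y_ge_n; have := comb_at_bound HT H; have := comb_at_gt0 lens H; lia.
Qed.

Lemma comb_at_chain_comb L c t : comb_at T L c t -> chain_comb m s L c t.
Proof.
move=> H; have [c0|c_gt0] := posnP c.
  by rewrite c0 in H *; rewrite (comb_at_len_uniq lens HT H (first_comb L)) /chain_comb !eqxx.
have a_le_c : a <= c by have := comb_at_ge H c_gt0; lia.
rewrite -(subnKC a_le_c) in H; apply/orP; right.
rewrite a_le_c (comb_at_on_chain H) /=.
have [x_lt_n|x_ge_n] := ltnP (c - a) n.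
  by have [jx -> _] := comb_at_jump x_lt_n H; rewrite /start jx eqxx.
have end_l := last_comb H x_ge_n; have := comb_at_len H.
rewrite /start /teeth jumpF //=; have [ex|ne] := eqVneq (c - a) n => ht.
  by apply/eqP; lia.
by rewrite /=; apply/andP; split; apply/eqP; lia.
Qed.

Lemma tiling_of_perm_eq : tiling_of_perm m f s = T.
Proof.
apply/esym/(line_tiling_eq lens (line_tiling_of_perm f s_adm) HT).
apply/subsetP => p pT; rewrite inE; apply: comb_at_chain_comb; exact: comb_at_mem pT.
Qed.

End TilingPerm.

Lemma perm_of_tiling : exists2 s : 'S_n, admissible m s & tiling_of_perm m f s = T.
Proof.
pose g (i : 'I_n) : 'I_n := insubd i (tiling_next i - 2).
have gE i : (g i).+2 = tiling_next i.
  have := tiling_next_gt1 (ltn_ord i); have := tiling_next_le (ltn_ord i).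
  by rewrite /g val_insubd; case: ifP; lia.
have g_inj : injective g.
  move=> i j /(congr1 (fun k : 'I_n => k.+2)); rewrite !gE.
  by move/(tiling_next_inj (ltn_ord i) (ltn_ord j))/val_inj.
have s_next (i : 'I_n) : (perm g_inj i).+2 = tiling_next i by rewrite permE.
by exists (perm g_inj); [apply: admissible_tiling_next | apply: tiling_of_perm_eq].
Qed.

End TilingToPerm.

Section Counting.

Variables (m n : nat).

Local Notation a := m.+1.
Local Notation l := (n + (2 * m + 3)).
Local Notation lens := (comb_lensS m).

Lemma tiling_next_of_perm f (s : 'S_n) : admissible m s ->
  forall i : 'I_n, tiling_next (tiling_of_perm m f s) i = (s i).+2.
Proof.
move=> s_adm i.
have [HT no_break _] := short_start_metatiles_lines (tiling_of_perm_short_start f s_adm).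
case js: (jump s i).
  have [L chL] : exists L : bool, on_chain m s L i.
    by case/orP: (start_on_chain s_adm (jump_start js)) => ch; [exists false | exists true].
  have H : comb_at m.+1 m.+2 f (tiling_of_perm m f s) L (a + i) (teeth m s i).
    apply/(comb_at_tiling_of_perm f s_adm).
    by rewrite /chain_comb leq_addr addKn jump_start // chL eqxx orbT.
  by rewrite (tiling_next_comb HT no_break H) -(chain_next_jump s_adm js) /chain_next js snE.
rewrite (tiling_next_free (f := f)) => [|L t].
  by move/negbT: js; rewrite /jump ltn_ord snE negbK => /eqP.
move/(comb_at_tiling_of_perm f s_adm)/chain_comb_gt0 => /(_ (ltn0Sn _)) [_ si _ _].
by move: si; rewrite addKn => /start_jump /(_ (ltn_ord i)); rewrite js.
Qed.

Lemma card_short_start_metatiles f :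
  #|short_start_metatiles m n f| = #|[set s : 'S_n | admissible m s]|.
Proof.
have tiling_of_perm_inj :
    {in [set s : 'S_n | admissible m s] &, injective (tiling_of_perm m f)}.
  move=> s1 s2; rewrite !inE => s1_adm s2_adm e; apply/permP => i; apply/val_inj.
  by apply/succn_inj/succn_inj; rewrite -!(tiling_next_of_perm f) // e.
rewrite -(card_in_imset tiling_of_perm_inj); apply: eq_card => T.
apply/idP/imsetP => [T_in | [s s_adm ->]]; last first.
  by rewrite inE in s_adm; apply: tiling_of_perm_short_start.
have [HT no_break short_first] := short_start_metatiles_lines T_in.
by have [s s_adm <-] := perm_of_tiling HT no_break short_first; exists s; rewrite ?inE.
Qed.

Lemma short_start_first_comb f (T : {set 'I_(2 * l) * bool}) :
  T \in short_start_metatiles m n f -> comb_at m.+1 m.+2 false T f 0 a.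
Proof. by case/short_start_metatiles_lines => _ _; case: f => // /comb_at_flip. Qed.

Lemma mu_short_start :
  mu m.+1 m.+2 l = #|short_start_metatiles m n false| + #|short_start_metatiles m n true|.
Proof.
have l_gt0 : 0 < l by lia.
have S_disjoint : short_start_metatiles m n false :&: short_start_metatiles m n true = set0.
  apply/setP => T; rewrite in_setI in_set0; apply/negP => /andP [T0 T1].
  have [HT no_break _] := short_start_metatiles_lines T0.
  have [H0 H1] := (short_start_first_comb T0, short_start_first_comb T1).
  by apply: (first_combs_neq lens HT no_break H0 H1); lia.
rewrite /mu; suff -> : [set T | is_metatile m.+1 m.+2 l T && is_mixed l T] =
          short_start_metatiles m n false :|: short_start_metatiles m n true.
  by rewrite cardsU S_disjoint cards0 subn0.
apply/setP => T; rewrite !inE.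
apply/idP/idP => [/andP [T_meta T_mixed] | /orP [] /and3P [-> -> _] //].
have [HT no_break] := (is_metatileP false lens T).1 T_meta.
have [[t0 H0] [t1 H1]] := (comb_at_first lens HT false l_gt0, comb_at_first lens HT true l_gt0).
have ne : t0 <> t1.
  by apply: (first_combs_neq lens HT no_break H0 H1); case: (comb_at_len H0); lia.
rewrite T_meta T_mixed !andTb; case: (comb_at_len H0) => et0; rewrite et0 in H0 ne.
  by apply/orP; left; apply/(first_comb_shortP _ lens).
case: (comb_at_len H1) => et1; rewrite et1 in H1 ne; last by case: ne.
by apply/orP; right; apply/(first_comb_shortP _ lens)/comb_at_flip.
Qed.

End Counting.

Unset Implicit Arguments.

Theorem theorem4 (m l : nat) :
  2 * m + 3 <= l ->
  mu m.+1 m.+2 l = 2 * Pcount (l - (2 * m + 3)) [:: (- 2)%R; (Posz m - 1)%R; Posz m].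
Proof.
move=> l_ge; rewrite -(subnK l_ge) addnK mu_short_start.
by rewrite !card_short_start_metatiles Pcount_admissible addnn -mul2n.
Qed.
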